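(* Let $\mathcal X\subseteq[0,1]$ be a Borel set with $0\in\mathcal X$ and $1\in\mathcal X$, and fix $\mu\in(0,1)$. Let $\mathcal H_\mu=\{P\in\mathcal P_{\mathcal X}:\mathbb E_P[X]=\mu\}$, let $I_\mu=[(\mu-1)^{-1},\mu^{-1}]$, and let $$\mathcal E^{\mathrm{cb}}_\mu=\big\{E_\beta:x\mapsto 1+\beta(x-\mu)\,,\ \beta\in I_\mu\big\}.$$ Then $\mathcal E^{\mathrm{cb}}_\mu$ is the optimal e-class for $\mathcal H_\mu$.
   Context: $\mathcal P_{\mathcal Z}$ denotes the set of Borel probability measures on a Borel set $\mathcal Z\subseteq\mathbb R^d$. A hypothesis is a non-empty $\mathcal H\subseteq\mathcal P_{\mathcal Z}$. An e-variable for $\mathcal H$ is a Borel measurable $E:\mathcal Z\to[0,+\infty)$ with $\mathbb E_P[E]\le 1$ for all $P\in\mathcal H$; $\mathcal E_{\mathcal H}$ is the set of all e-variables for $\mathcal H$, and an e-class is any subset of $\mathcal E_{\mathcal H}$. For functions $f,f'$ on $\mathcal Z$, $f\succeq f'$ means $f(z)\ge f'(z)$ for all $z\in\mathcal Z$. An e-class $\mathcal E$ majorises an e-class $\mathcal E'$ if for every $E'\in\mathcal E'$ there is $E\in\mathcal E$ with $E\succeq E'$; $\mathcal E$ is a majorising e-class if it majorises $\mathcal E_{\mathcal H}$. A majorising e-class is called optimal if it is contained in every other majorising e-class. *)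

From HB Require Import structures.
From mathcomp Require Import all_boot all_order all_algebra.
From mathcomp Require Import all_classical all_reals all_analysis.
Set Implicit Arguments. Unset Strict Implicit. Unset Printing Implicit Defensive.
Import Order.TTheory GRing.Theory Num.Theory.
Local Open Scope classical_set_scope.
Local Open Scope ring_scope.

(* A Borel probability measure on X
   is encoded as a Borel probability measure P on R with P X = 1.
   A function on X is encoded as a function R -> R vanishing outside X. *)

Definition prob_on (R : realType) (X : set R) : set (probability R R) :=
  [set P | P X = 1%E].

Definition evar (R : realType) (X : set R) (H : set (probability R R))
  (E : R -> R) : Prop :=
  [/\ measurable_fun setT E,
      (forall x, 0 <= E x),
      (forall x, ~ X x -> E x = 0) &
      (forall P, H P -> (\int[P]_x (E x)%:E <= 1)%E)].

Definition eclass (R : realType) (X : set R) (H : set (probability R R))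
  (C : set (R -> R)) : Prop := C `<=` evar X H.

Definition dominates (R : realType) (X : set R) (f f' : R -> R) : Prop :=
  forall x, X x -> f' x <= f x.

Definition majorises (R : realType) (X : set R) (C C' : set (R -> R)) : Prop :=
  forall E', C' E' -> exists2 E, C E & dominates X E E'.

Definition majorising (R : realType) (X : set R) (H : set (probability R R))
  (C : set (R -> R)) : Prop :=
  eclass X H C /\ majorises X C (evar X H).

Definition optimal_eclass (R : realType) (X : set R) (H : set (probability R R))
  (C : set (R -> R)) : Prop :=
  majorising X H C /\
  forall C', majorising X H C' -> C `<=` C'.

Definition H_mean (R : realType) (X : set R) (mu : R) : set (probability R R) :=
  [set P | prob_on X P /\ (\int[P]_x (x%:E) = mu%:E)%E].

Definition E_beta (R : realType) (X : set R) (mu beta : R) : R -> R :=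
  fun x => if x \in X then 1 + beta * (x - mu) else 0.

Definition Ecb (R : realType) (X : set R) (mu : R) : set (R -> R) :=
  [set E | exists2 beta, (mu - 1)^-1 <= beta <= mu^-1 & E = E_beta X mu beta].

From HB Require Import structures.
From mathcomp Require Import all_boot all_order all_algebra.
From mathcomp Require Import all_classical all_reals all_analysis.
From mathcomp Require Import ring lra measurable_realfun.
Set Implicit Arguments.
Unset Strict Implicit.
Unset Printing Implicit Defensive.

Import Order.TTheory GRing.Theory Num.Theory.
Local Open Scope classical_set_scope.
Local Open Scope ring_scope.

(* An e-variable E for H_mu has expectation at most 1 under every two-point
   law with mean mu, i.e. for a <= mu <= b in X the chord of E between a and b
   passes below the point (mu, 1).  Hence every slope (1 - E a) / (mu - a) with
   a < mu dominates every slope (E b - 1) / (b - mu) with b > mu, and the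
   infimum beta of the former gives a line 1 + beta (x - mu) lying above E on
   X; evaluating at 0 and 1, where E >= 0, puts beta in I_mu.  Conversely, on X
   the line is (1 - beta mu) (1 - x) + (1 + beta (1 - mu)) x, a nonnegative
   combination exactly when beta is in I_mu, so its expectation under H_mu is
   1.  Finally, the chord inequality through the endpoint 1 (or 0) forces an
   e-variable dominating such a line to coincide with it, so each E_beta lies
   in every majorising class. *)

Section two_point.
Context (R : realType) (a b : R) (p q : {nonneg R}).
Hypothesis pq1 : p%:num + q%:num = 1.

Definition two_point := measure_add (mscale p \d_a) (mscale q \d_b).

HB.instance Definition _ := Measure.on two_point.

Let two_pointT : two_point setT = 1%E.
Proof.
by rewrite /two_point measure_addE /= /mscale /= !diracT !mule1 -EFinD pq1.
Qed.

HB.instance Definition _ :=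
  Measure_isProbability.Build _ _ _ two_point two_pointT.

Definition two_point_prob : probability R R := two_point.

Lemma two_point_supp (A : set R) : A a -> A b -> two_point_prob A = 1%E.
Proof.
move=> Aa Ab; rewrite /= /two_point measure_addE /= /mscale /=.
by rewrite !diracE !mem_set // !mule1 -EFinD pq1.
Qed.

Lemma ge0_integral_two_point (f : R -> \bar R) :
  measurable_fun [set: R] f -> (forall x, 0 <= f x)%E ->
  (\int[two_point_prob]_x f x = p%:num%:E * f a + q%:num%:E * f b)%E.
Proof.
move=> mf f0; rewrite ge0_integral_measure_add // !ge0_integral_mscale //.
by rewrite !integral_dirac // !diracT !mul1e.
Qed.

Lemma integral_two_point (g : R -> R) : measurable_fun [set: R] g ->
  (\int[two_point_prob]_x (g x)%:E = (p%:num * g a + q%:num * g b)%:E)%E.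
Proof.
move=> mg; have mG : measurable_fun [set: R] (EFin \o g).
  exact/measurable_EFinP.
rewrite integralE !ge0_integral_two_point //;
  [|exact: measurable_funeneg|exact: measurable_funepos].
have gE x : g x = g^\+ x - g^\- x := esym (congr1 (@^~ x) (funrposBneg g)).
rewrite !funeposE !funenegE /= (_ : 0%E = 0%:E) // -!EFin_max -!EFinM -!EFinD.
by rewrite [in RHS](gE a) [in RHS](gE b) /funrpos /funrneg; congr EFin; ring.
Qed.

End two_point.

Section evar_chord.
Variables (R : realType) (X : set R) (mu : R) (E : R -> R).
Hypothesis evarE : evar X (H_mean X mu) E.

Lemma evar_two_point_le1 a b (p q : {nonneg R}) (pq1 : p%:num + q%:num = 1) :
  X a -> X b -> p%:num * a + q%:num * b = mu ->
  p%:num * E a + q%:num * E b <= 1.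
Proof.
move: evarE => [mE E0 _ intE] Xa Xb pqmu.
have Hpq : H_mean X mu (two_point_prob a b pq1).
  split; first exact: two_point_supp.
  by rewrite integral_two_point ?pqmu.
have := intE _ Hpq; rewrite ge0_integral_two_point.
- by rewrite -!EFinM -EFinD lee_fin.
- exact/measurable_EFinP.
- by move=> x; rewrite lee_fin.
Qed.

Lemma evar_le1_at_mean : X mu -> E mu <= 1.
Proof.
move=> Xmu; have pq1 : 1%:nng%:num + 0%:nng%:num = 1 :> R by rewrite addr0.
have := evar_two_point_le1 pq1 Xmu Xmu.
by rewrite /= !mul1r !mul0r !addr0; apply.
Qed.

Lemma evar_chord_le a b : X a -> X b -> a <= mu -> mu <= b ->
  (b - mu) * E a + (mu - a) * E b <= b - a.
Proof.
move=> Xa Xb amu mub.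
have [ab|ba] := ltP a b; last first.
  have [-> ->] : a = mu /\ b = mu by split; lra.
  by rewrite !subrr !mul0r addr0.
have ba0 : 0 < b - a by rewrite subr_gt0.
have p0 : 0 <= (b - mu) / (b - a) by rewrite divr_ge0 ?subr_ge0 // ltW.
have q0 : 0 <= (mu - a) / (b - a) by rewrite divr_ge0 ?subr_ge0 // ltW.
have pq1 : (NngNum p0)%:num + (NngNum q0)%:num = 1.
  by rewrite /= -mulrDl addrA subrK divff // gt_eqF.
have mean : (b - mu) / (b - a) * a + (mu - a) / (b - a) * b = mu.
  by field; rewrite gt_eqF.
have := evar_two_point_le1 pq1 Xa Xb mean; rewrite /=.
by rewrite [_ / _ * E a]mulrAC [_ / _ * E b]mulrAC -mulrDl ler_pdivrMr // mul1r.
Qed.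
End evar_chord.

Section E_beta.
Variables (R : realType) (X : set R) (mu : R).

Lemma E_betaE beta x : X x -> E_beta X mu beta x = 1 + beta * (x - mu).
Proof. by move=> Xx; rewrite /E_beta mem_set. Qed.

Lemma E_beta_notin beta x : ~ X x -> E_beta X mu beta x = 0.
Proof. by move=> Xx; rewrite /E_beta memNset. Qed.

Hypotheses (mu0 : 0 < mu) (mu1 : mu < 1).

Lemma cb_slopeP beta : (mu - 1)^-1 <= beta <= mu^-1 <->
  beta * (mu - 1) <= 1 /\ beta * mu <= 1.
Proof.
rewrite -[_ * mu <= 1]ler_pdivlMr // -[_ * (mu - 1) <= 1]ler_ndivrMr.
  by rewrite !div1r; split=> /andP.
by rewrite subr_lt0.
Qed.

Hypotheses (mX : measurable X) (X01 : X `<=` `[0, 1]).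

Let measurable_indic_id : measurable_fun [set: R] (fun x => \1_X x * x).
Proof. by apply: measurable_funM => //; exact: measurable_indic. Qed.

Let measurable_indic_onem :
  measurable_fun [set: R] (fun x => \1_X x * (1 - x)).
Proof.
by apply: measurable_funM; [exact: measurable_indic|exact: measurable_funB].
Qed.

Let indic_id_ge0 x : 0 <= \1_X x * x.
Proof.
rewrite indicE; have [/set_mem/X01|] := boolP (x \in X); last by rewrite mul0r.
by rewrite /= in_itv mul1r => /andP[].
Qed.

Let indic_onem_ge0 x : 0 <= \1_X x * (1 - x).
Proof.
rewrite indicE; have [/set_mem/X01|] := boolP (x \in X); last by rewrite mul0r.
by rewrite /= in_itv mul1r subr_ge0 => /andP[].
Qed.

Lemma integral_indic_id P : H_mean X mu P ->
  (\int[P]_x (\1_X x * x)%:E = mu%:E)%E.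
Proof.
move=> [PX <-]; apply: ae_eq_integral => //.
  exact/measurable_EFinP.
exists (~` X); split => [||x /= nae]; first exact: measurableC.
- by move: (probability_setC P mX); rewrite [P X]PX subee.
by move=> Xx; apply: nae => _; rewrite indicE mem_set ?mul1r.
Qed.

Lemma integral_indic_onem P : H_mean X mu P ->
  (\int[P]_x (\1_X x * (1 - x))%:E = (1 - mu)%:E)%E.
Proof.
move=> HP; have [PX _] := HP.
have : (\int[P]_x (\1_X x * (1 - x))%:E + \int[P]_x (\1_X x * x)%:E = 1)%E.
  rewrite -ge0_integralD //; [|by move=> ? _; rewrite lee_fin|
    exact/measurable_EFinP|by move=> ? _; rewrite lee_fin|
    exact/measurable_EFinP].
  under eq_integral do rewrite -EFinD -mulrDr subrK mulr1.
  by rewrite integral_indic // setIT.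
by rewrite integral_indic_id // EFinB => <-; rewrite addeK.
Qed.

Lemma evar_E_beta beta : (mu - 1)^-1 <= beta <= mu^-1 ->
  evar X (H_mean X mu) (E_beta X mu beta).
Proof.
move=> /cb_slopeP[beta_lo beta_hi].
have c0 : 0 <= 1 - beta * mu by lra.
have c1 : 0 <= 1 + beta * (1 - mu) by lra.
have -> : E_beta X mu beta = fun x =>
    (1 - beta * mu) * (\1_X x * (1 - x)) + (1 + beta * (1 - mu)) * (\1_X x * x).
  by apply/funext => x; rewrite /E_beta indicE; case: (x \in X) => /=; ring.
split.
- by apply: measurable_funD; exact: measurable_funM.
- by move=> x; rewrite addr_ge0 // mulr_ge0.
- by move=> x nXx; rewrite indicE memNset // !mul0r !mulr0 addr0.
move=> P HP; under eq_integral do rewrite EFinD (EFinM (1 - _)) (EFinM (1 + _)).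
rewrite ge0_integralD //; first last.
- exact/measurable_funeM/measurable_EFinP.
- by move=> x _; rewrite -EFinM lee_fin mulr_ge0.
- exact/measurable_funeM/measurable_EFinP.
- by move=> x _; rewrite -EFinM lee_fin mulr_ge0.
rewrite !ge0_integralZl //; first last.
- by move=> x _; rewrite lee_fin.
- exact/measurable_EFinP.
- by move=> x _; rewrite lee_fin.
- exact/measurable_EFinP.
rewrite integral_indic_onem // integral_indic_id // -!EFinM -EFinD lee_fin.
by have -> : (1 - beta * mu) * (1 - mu) + (1 + beta * (1 - mu)) * mu = 1
  by ring.
Qed.

End E_beta.

Section cb_optimality.
Variables (R : realType) (X : set R) (mu : R).
Hypotheses (X0 : X 0) (X1 : X 1) (mu0 : 0 < mu) (mu1 : mu < 1).

Section dominating_slope.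
Variable E : R -> R.
Hypothesis evarE : evar X (H_mean X mu) E.

Lemma E_beta_dominates beta :
  (forall a, X a -> a < mu -> beta * (mu - a) <= 1 - E a) ->
  (forall b, X b -> mu < b -> E b - 1 <= beta * (b - mu)) ->
  dominates X (E_beta X mu beta) E.
Proof.
move=> below above x Xx; rewrite E_betaE //.
have [xmu|mux|xmu] := ltgtP x mu.
- by have := below x Xx xmu; lra.
- by have := above x Xx mux; lra.
- by rewrite xmu subrr mulr0 addr0 (evar_le1_at_mean evarE) // -xmu.
Qed.

Lemma evar_slope_le a b : X a -> X b -> a < mu -> mu < b ->
  (E b - 1) / (b - mu) <= (1 - E a) / (mu - a).
Proof.
move=> Xa Xb amu mub.
rewrite ler_pdivrMr ?subr_gt0 // mulrAC ler_pdivlMr ?subr_gt0 //.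
by have := evar_chord_le evarE Xa Xb (ltW amu) (ltW mub); lra.
Qed.

Lemma exists_separating_slope : exists beta,
  (forall a, X a -> a < mu -> beta * (mu - a) <= 1 - E a) /\
  (forall b, X b -> mu < b -> E b - 1 <= beta * (b - mu)).
Proof.
pose S := [set (1 - E a) / (mu - a) | a in [set a | X a /\ a < mu]].
have S0 : S !=set0 by exists ((1 - E 0) / (mu - 0)), 0.
have S_lb b : X b -> mu < b -> lbound S ((E b - 1) / (b - mu)).
  by move=> Xb mub _ [a [Xa amu] <-]; exact: evar_slope_le.
exists (inf S); split=> [a Xa amu|b Xb mub].
- rewrite -ler_pdivlMr ?subr_gt0 //; apply: ge_inf; last by exists a.
  by exists ((E 1 - 1) / (1 - mu)); exact: S_lb.
- rewrite -ler_pdivrMr ?subr_gt0 //.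
  by apply: lb_le_inf; [exact: S0|exact: S_lb].
Qed.

End dominating_slope.

Lemma majorises_Ecb : majorises X (Ecb X mu) (evar X (H_mean X mu)).
Proof.
move=> E evarE; have [_ E_ge0 _ _] := evarE.
have [beta [below above]] := exists_separating_slope evarE.
exists (E_beta X mu beta); last exact: E_beta_dominates.
exists beta => //; apply/cb_slopeP => //; split.
- by have := above 1 X1 mu1; have := E_ge0 1; lra.
- by have := below 0 X0 mu0; have := E_ge0 0; lra.
Qed.

Lemma E_beta_maximal beta E : evar X (H_mean X mu) E ->
  dominates X E (E_beta X mu beta) -> E = E_beta X mu beta.
Proof.
move=> evarE dom; have [_ _ E_notin _] := evarE.
apply/funext => x; have [Xx|nXx] := pselect (X x); last first.
  by rewrite E_notin // E_beta_notin.
apply/le_anti; rewrite dom // andbT E_betaE //.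
have := dom 0 X0; have := dom 1 X1; rewrite !E_betaE // => E1 E0.
have [xmu|mux|xmu] := ltgtP x mu.
- rewrite -(@ler_pM2l _ (1 - mu)) ?subr_gt0 //.
  have mu_x : 0 <= mu - x by rewrite subr_ge0 ltW.
  have := ler_wpM2l mu_x E1.
  have := evar_chord_le evarE Xx X1 (ltW xmu) (ltW mu1); lra.
- rewrite -(@ler_pM2l _ mu) //.
  have x_mu : 0 <= x - mu by rewrite subr_ge0 ltW.
  have := ler_wpM2l x_mu E0.
  have := evar_chord_le evarE X0 Xx (ltW mu0) (ltW mux); lra.
- by rewrite xmu subrr mulr0 addr0 (evar_le1_at_mean evarE) // -xmu.
Qed.

End cb_optimality.

Theorem theorem1 (R : realType) (X : set R) (mu : R) :
  measurable X -> X `<=` `[0, 1] -> X 0 -> X 1 -> 0 < mu < 1 ->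
  optimal_eclass X (H_mean X mu) (Ecb X mu).
Proof.
move=> mX X01 X0 X1 /andP[mu0 mu1].
have Ecb_evar : eclass X (H_mean X mu) (Ecb X mu).
  by move=> _ [beta Ibeta ->]; exact: evar_E_beta.
split; first by split; last exact: majorises_Ecb.
move=> C' [C'_evar C'_maj] _ [beta Ibeta ->].
have [E C'E dom] := C'_maj _ (evar_E_beta mu0 mu1 mX X01 Ibeta).
by rewrite -(E_beta_maximal X0 X1 mu0 mu1 (C'_evar _ C'E) dom).
Qed.
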